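(* Let $K$ be a unital commutative ring containing $\mathbb{Q}$ and let $\big(\mathfrak{h},p,\mathfrak{g},[~,~]_\mathfrak{g},\dot{\rho}\big)$ be a $\mathfrak{g}$-augmented Leibniz algebra over $K$. Define a bracket on $\mathfrak{h}$ by $[x,y]_\mathfrak{h}:=p(x).y$ for $x,y\in\mathfrak{h}$. Then: \begin{enumerate} \item $\big(\mathfrak{h},[~,~]_\mathfrak{h}\big)$ is a (left) Leibniz algebra on which $\mathfrak{g}$ acts by derivations (via $\dot\rho$). If $(\Phi,\phi)$ is a morphism of augmented Leibniz algebras, then $\Phi$ is a morphism of Leibniz algebras for these brackets. \item $\mathrm{Ker}(p)$ is a $\mathfrak{g}$-invariant two-sided abelian ideal of $\big(\mathfrak{h},[~,~]_\mathfrak{h}\big)$ satisfying $Q(\mathfrak{h})\subset\mathrm{Ker}(p)\subset\mathfrak{z}(\mathfrak{h})$. \item $\mathrm{Im}(p)$ is an ideal of the Lie algebra $\mathfrak{g}$. \end{enumerate}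
   Context: A (left) Leibniz algebra over $K$ is a $K$-module $\mathfrak{h}$ with a bilinear bracket satisfying $[x,[y,z]]=[[x,y],z]+[y,[x,z]]$ for all $x,y,z$; a morphism of Leibniz algebras is a $K$-linear bracket-preserving map. For a Leibniz algebra $\mathfrak{h}$: $Q(\mathfrak{h})$ is the $K$-submodule of all finite sums $\sum_r\lambda_r[x_r,x_r]$ ($\lambda_r\in K$, $x_r\in\mathfrak{h}$), and $\mathfrak{z}(\mathfrak{h}):=\{x\in\mathfrak{h}\mid [x,y]=0\ \forall y\in\mathfrak{h}\}$. A $\mathfrak{g}$-augmented Leibniz algebra $\big(\mathfrak{h},p,\mathfrak{g},[~,~]_\mathfrak{g},\dot{\rho}\big)$ consists of a Lie algebra $(\mathfrak{g},[~,~]_\mathfrak{g})$ over $K$, a $K$-module $\mathfrak{h}$ which is a left $\mathfrak{g}$-module via $\dot\rho:\mathfrak{g}\otimes\mathfrak{h}\to\mathfrak{h}$, written $\dot\rho_\xi(x)=\xi.x$, and a $K$-linear map $p:\mathfrak{h}\to\mathfrak{g}$ with $p(\xi.x)=[\xi,p(x)]_\mathfrak{g}$ for all $\xi\in\mathfrak{g},x\in\mathfrak{h}$. A morphism $(\Phi,\phi)$ from $\big(\mathfrak{h},p,\mathfrak{g},[~,~]_\mathfrak{g},\dot{\rho}\big)$ to $\big(\mathfrak{h}',p',\mathfrak{g}',[~,~]'_{\mathfrak{g}'},\dot{\rho}'\big)$ is a pair of $K$-linear maps with $\phi:\mathfrak{g}\to\mathfrak{g}'$ a Lie algebra morphism,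 $\Phi:\mathfrak{h}\to\mathfrak{h}'$ satisfying $\Phi(\xi.x)=\phi(\xi).\Phi(x)$, and $p'\circ\Phi=\phi\circ p$. *)

From HB Require Import structures.
From mathcomp Require Import all_boot all_algebra.
Set Implicit Arguments. Unset Strict Implicit. Unset Printing Implicit Defensive.
Import GRing.Theory.
Local Open Scope ring_scope.

Section Defs.
Variable K : comUnitRingType.

Definition contains_Q : Prop := forall n : nat, (n.+1)%:R \is a @GRing.unit K.

Definition is_linear (U V : lmodType K) (f : U -> V) : Prop :=
  forall (a : K) (x y : U), f (a *: x + y) = a *: f x + f y.

Definition is_bilinear (U V W : lmodType K) (b : U -> V -> W) : Prop :=
  (forall (a : K) x x' y, b (a *: x + x') y = a *: b x y + b x' y) /\
  (forall (a : K) x y y', b x (a *: y + y') = a *: b x y + b x y').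

Definition is_lie_algebra (g : lmodType K) (br : g -> g -> g) : Prop :=
  is_bilinear br /\ (forall x, br x x = 0) /\
  (forall x y z, br x (br y z) + br y (br z x) + br z (br x y) = 0).

Definition is_leibniz (h : lmodType K) (br : h -> h -> h) : Prop :=
  is_bilinear br /\
  (forall x y z, br x (br y z) = br (br x y) z + br y (br x z)).

Definition is_lie_module (g : lmodType K) (brg : g -> g -> g)
  (h : lmodType K) (rho : g -> h -> h) : Prop :=
  is_bilinear rho /\
  (forall a b x, rho (brg a b) x = rho a (rho b x) - rho b (rho a x)).

Definition is_augmented_leibniz (h g : lmodType K) (p : h -> g)
  (brg : g -> g -> g) (rho : g -> h -> h) : Prop :=
  is_lie_algebra brg /\ is_lie_module brg rho /\ is_linear p /\
  (forall xi x, p (rho xi x) = brg xi (p x)).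

Definition is_augmented_morphism (h g : lmodType K) (p : h -> g)
  (brg : g -> g -> g) (rho : g -> h -> h)
  (h' g' : lmodType K) (p' : h' -> g')
  (brg' : g' -> g' -> g') (rho' : g' -> h' -> h')
  (Phi : h -> h') (phi : g -> g') : Prop :=
  is_linear Phi /\ is_linear phi /\
  (forall a b, phi (brg a b) = brg' (phi a) (phi b)) /\
  (forall xi x, Phi (rho xi x) = rho' (phi xi) (Phi x)) /\
  (forall x, p' (Phi x) = phi (p x)).

Definition is_leibniz_morphism (h h' : lmodType K) (br : h -> h -> h)
  (br' : h' -> h' -> h') (f : h -> h') : Prop :=
  is_linear f /\ (forall x y, f (br x y) = br' (f x) (f y)).

Definition induced_bracket (h g : lmodType K) (p : h -> g)
  (rho : g -> h -> h) : h -> h -> h := fun x y => rho (p x) y.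

Definition acts_by_derivations (g h : lmodType K) (rho : g -> h -> h)
  (br : h -> h -> h) : Prop :=
  forall xi x y, rho xi (br x y) = br (rho xi x) y + br x (rho xi y).

Definition Qsq (h : lmodType K) (br : h -> h -> h) (z : h) : Prop :=
  exists s : seq (K * h), z = \sum_(u <- s) u.1 *: br u.2 u.2.

Definition leib_center (h : lmodType K) (br : h -> h -> h) (z : h) : Prop :=
  forall y, br z y = 0.

Definition ker_of (h g : lmodType K) (p : h -> g) (x : h) : Prop := p x = 0.
Definition im_of (h g : lmodType K) (p : h -> g) (y : g) : Prop :=
  exists x, y = p x.

Definition is_submodule (V : lmodType K) (I : V -> Prop) : Prop :=
  I 0 /\ (forall (a : K) x y, I x -> I y -> I (a *: x + y)).

Definition is_two_sided_ideal (V : lmodType K) (br : V -> V -> V)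
  (I : V -> Prop) : Prop :=
  is_submodule I /\ (forall x y, I y -> I (br x y)) /\
  (forall x y, I x -> I (br x y)).

Definition is_abelian_sub (V : lmodType K) (br : V -> V -> V)
  (I : V -> Prop) : Prop := forall x y, I x -> I y -> br x y = 0.

Definition is_invariant (g h : lmodType K) (rho : g -> h -> h)
  (I : h -> Prop) : Prop := forall xi x, I x -> I (rho xi x).

Definition subset_pred (V : Type) (A B : V -> Prop) : Prop :=
  forall x, A x -> B x.
End Defs.

(* Since [p] is g-equivariant, [p (xi.x) = [xi, p x]], the module identity
   [[xi, p x].y = xi.(p(x).y) - p(x).(xi.y)] says exactly that each [xi] is a
   derivation of [[x,y]_h = p(x).y]; for [xi = p x] this is the left Leibniz
   identity.  Everything about [Ker p] follows because [[x,y]_h] only depends on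
   [p x], and [p [x,x]_h = [p x, p x] = 0]; [Im p] is an ideal by equivariance. *)
From mathcomp Require Import all_boot all_algebra.
Import GRing.Theory.
Local Open Scope ring_scope.
Set Implicit Arguments. Unset Strict Implicit.

Section LinearAlgebra.
Variable K : comUnitRingType.

Section LinearMap.
Variables (U V : lmodType K) (f : U -> V).
Hypothesis f_lin : is_linear f.

Lemma linear_map0 : f 0 = 0.
Proof.
have := f_lin 1 0 0; rewrite !scale1r addr0 => /(congr1 (fun v => v - f 0)).
by rewrite subrr addrK => ->.
Qed.

Lemma linear_mapD x y : f (x + y) = f x + f y.
Proof. by have := f_lin 1 x y; rewrite !scale1r. Qed.

Lemma linear_mapZ a x : f (a *: x) = a *: f x.
Proof. by have := f_lin a x 0; rewrite !addr0 linear_map0 addr0. Qed.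

Lemma linear_map_ker_submodule : is_submodule (ker_of f).
Proof.
split; first exact: linear_map0.
by move=> a x y; rewrite /ker_of f_lin => -> ->; rewrite scaler0 addr0.
Qed.

Lemma linear_map_im_submodule : is_submodule (im_of f).
Proof.
split; first by exists 0; rewrite linear_map0.
by move=> a _ _ [x ->] [y ->]; exists (a *: x + y); rewrite f_lin.
Qed.

Lemma Qsq_sub_ker (br : U -> U -> U) :
  (forall x, f (br x x) = 0) -> subset_pred (Qsq br) (ker_of f).
Proof.
move=> f_sq0 _ [s ->]; rewrite /ker_of; elim: s => [|u s IH].
  by rewrite big_nil linear_map0.
by rewrite big_cons linear_mapD IH linear_mapZ f_sq0 scaler0 addr0.
Qed.

End LinearMap.

Section BilinearMap.
Variables (U V W : lmodType K) (b : U -> V -> W).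
Hypothesis b_bil : is_bilinear b.

Lemma bilinear_linear_l y : is_linear (b^~ y).
Proof. by move=> a x x'; apply: b_bil.1. Qed.

Lemma bilinear_linear_r x : is_linear (b x).
Proof. by move=> a y y'; apply: b_bil.2. Qed.

Lemma bilinear0l y : b 0 y = 0.
Proof. exact: (linear_map0 (bilinear_linear_l y)). Qed.

Lemma bilinear0r x : b x 0 = 0.
Proof. exact: linear_map0 (bilinear_linear_r x). Qed.

Lemma bilinearDl x x' y : b (x + x') y = b x y + b x' y.
Proof. exact: (linear_mapD (bilinear_linear_l y) x x'). Qed.

Lemma bilinearDr x y y' : b x (y + y') = b x y + b x y'.
Proof. exact: (linear_mapD (bilinear_linear_r x) y y'). Qed.

Lemma bilinearZr a x y : b x (a *: y) = a *: b x y.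
Proof. exact: (linear_mapZ (bilinear_linear_r x) a y). Qed.

End BilinearMap.

Lemma lie_anticomm (g : lmodType K) (brg : g -> g -> g) :
  is_lie_algebra brg -> forall a b, brg a b = - brg b a.
Proof.
case=> bil [alt _] a b; apply/eqP; rewrite -subr_eq0 opprK.
have := alt (a + b).
by rewrite (bilinearDl bil) !(bilinearDr bil) !alt add0r addr0 => ->.
Qed.

Lemma augmented_morphism_leibniz_morphism
    (h g h' g' : lmodType K) (p : h -> g) (brg : g -> g -> g)
    (rho : g -> h -> h) (p' : h' -> g') (brg' : g' -> g' -> g')
    (rho' : g' -> h' -> h') (Phi : h -> h') (phi : g -> g') :
  is_augmented_morphism p brg rho p' brg' rho' Phi phi ->
  is_leibniz_morphism (induced_bracket p rho) (induced_bracket p' rho') Phi.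
Proof.
case=> Phi_lin [_ [_ [Phi_rho p'Phi]]]; split=> // x y.
by rewrite /induced_bracket Phi_rho p'Phi.
Qed.

Section AugmentedLeibniz.
Variables (h g : lmodType K) (p : h -> g) (brg : g -> g -> g)
  (rho : g -> h -> h).
Hypothesis aug : is_augmented_leibniz p brg rho.

Let brh := induced_bracket p rho.
Let lie : is_lie_algebra brg := aug.1.
Let rho_bil : is_bilinear rho := aug.2.1.1.
Let rho_mod a b x : rho (brg a b) x = rho a (rho b x) - rho b (rho a x) :=
  aug.2.1.2 a b x.
Let p_lin : is_linear p := aug.2.2.1.
Let p_equiv xi x : p (rho xi x) = brg xi (p x) := aug.2.2.2 xi x.

Lemma induced_bracket_bilinear : is_bilinear brh.
Proof.
split=> a *; rewrite /brh /induced_bracket; first by rewrite p_lin rho_bil.1.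
exact: rho_bil.2.
Qed.

Lemma induced_bracket_derivations : acts_by_derivations rho brh.
Proof. by move=> xi x y; rewrite /brh /induced_bracket p_equiv rho_mod addrNK. Qed.

Lemma induced_bracket_leibniz : is_leibniz brh.
Proof.
split; first exact: induced_bracket_bilinear.
by move=> x y z; apply: induced_bracket_derivations.
Qed.

Lemma ker_invariant : is_invariant rho (ker_of p).
Proof. by move=> xi x; rewrite /ker_of p_equiv => ->; rewrite (bilinear0r lie.1). Qed.

Lemma ker_in_center : subset_pred (ker_of p) (leib_center brh).
Proof. by move=> x px0 y; rewrite /brh /induced_bracket px0 (bilinear0l rho_bil). Qed.

Lemma ker_two_sided_ideal : is_two_sided_ideal brh (ker_of p).
Proof.
split; first exact: linear_map_ker_submodule.
split=> x y; first exact: ker_invariant.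
by move/ker_in_center => ->; exact: linear_map0.
Qed.

Lemma ker_abelian : is_abelian_sub brh (ker_of p).
Proof. by move=> x y /ker_in_center. Qed.

Lemma Qsq_sub_ker_induced : subset_pred (Qsq brh) (ker_of p).
Proof. by apply: Qsq_sub_ker => // x; rewrite /brh /induced_bracket p_equiv lie.2.1. Qed.

Lemma im_two_sided_ideal : is_two_sided_ideal brg (im_of p).
Proof.
split; first exact: linear_map_im_submodule.
split=> [xi _ [x ->]|_ xi [x ->]]; first by exists (rho xi x); rewrite p_equiv.
exists (rho xi (- x)).
by rewrite p_equiv -scaleN1r (linear_mapZ p_lin) (bilinearZr lie.1) scaleN1r
  -(lie_anticomm lie).
Qed.

End AugmentedLeibniz.
End LinearAlgebra.

Theorem proposition2p2 (K : comUnitRingType) (hQ : contains_Q K)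
  (h g : lmodType K) (p : h -> g) (brg : g -> g -> g) (rho : g -> h -> h)
  (Haug : is_augmented_leibniz p brg rho) :
  let brh := induced_bracket p rho in
  (* 1 *)
  (is_leibniz brh /\ acts_by_derivations rho brh /\
   (forall (h' g' : lmodType K) (p' : h' -> g') (brg' : g' -> g' -> g')
      (rho' : g' -> h' -> h') (Phi : h -> h') (phi : g -> g'),
      is_augmented_leibniz p' brg' rho' ->
      is_augmented_morphism p brg rho p' brg' rho' Phi phi ->
      is_leibniz_morphism brh (induced_bracket p' rho') Phi)) /\
  (* 2 *)
  (is_invariant rho (ker_of p) /\ is_two_sided_ideal brh (ker_of p) /\
   is_abelian_sub brh (ker_of p) /\
   subset_pred (Qsq brh) (ker_of p) /\
   subset_pred (ker_of p) (leib_center brh)) /\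
  (* 3 *)
  is_two_sided_ideal brg (im_of p).
Proof.
move=> brh; split; [|split].
- split; first exact: induced_bracket_leibniz Haug.
  split; first exact: induced_bracket_derivations Haug.
  by move=> h' g' p' brg' rho' Phi phi _; apply: augmented_morphism_leibniz_morphism.
- split; first exact: ker_invariant Haug.
  split; first exact: ker_two_sided_ideal Haug.
  split; first exact: ker_abelian Haug.
  split; first exact: Qsq_sub_ker_induced Haug.
  exact: ker_in_center Haug.
- exact: im_two_sided_ideal Haug.
Qed.
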